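(* Let $\mathbb{F}$ be a field of characteristic not $2$, $\alpha\in\mathbb{F}\setminus\{0,1\}$, and suppose $\mathbb{F}$ contains a root $\zeta$ of $x^2-(4\alpha-2)x+1$. In $\mathfrak{J}(\alpha)$ let $\mu=-\frac{1+\zeta}{4}$, $\nu=-\frac{1+\zeta^{-1}}{4}$, $\mathfrak{s}=\frac{1}{4(\alpha-1)}(\mu\mathfrak{a}+\mathfrak{a}\mathfrak{b}+\nu\mathfrak{b})$, $\mathfrak{t}=\frac{1}{\alpha(\alpha-1)}(\nu\mathfrak{a}+\mathfrak{a}\mathfrak{b}+\mu\mathfrak{b})$, and $1_{\mathfrak{J}}=\frac{2}{\alpha-1}\sigma$. If $\mathfrak{d}=\xi\mathfrak{s}+\frac12 1_{\mathfrak{J}}+\xi^{-1}\mathfrak{t}$, for some $0\neq\xi\in\mathbb{F}$, is a primitive axis of Jordan type half of $\mathfrak{J}(\alpha)$, then $\mathfrak{s}^{\tau_{\mathfrak{d}}}=\xi^{-2}\mathfrak{t}$ and $\mathfrak{t}^{\tau_{\mathfrak{d}}}=\xi^{2}\mathfrak{s}$.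
   Context: $\mathfrak{J}(\alpha)$ is the commutative algebra with basis $\mathfrak{a},\mathfrak{b},\sigma$ and product $\mathfrak{a}^2=\mathfrak{a}$, $\mathfrak{b}^2=\mathfrak{b}$, $\mathfrak{a}\mathfrak{b}=\frac12\mathfrak{a}+\frac12\mathfrak{b}+\sigma$, $\mathfrak{a}\sigma=\frac{\alpha-1}{2}\mathfrak{a}$, $\mathfrak{b}\sigma=\frac{\alpha-1}{2}\mathfrak{b}$, $\sigma^2=\frac{\alpha-1}{2}\sigma$; $1_{\mathfrak{J}}$ is its identity. Its Frobenius form has Gram matrix, in the basis $\mathfrak{a},\mathfrak{b},\sigma$: $(\mathfrak{a},\mathfrak{a})=(\mathfrak{b},\mathfrak{b})=1$, $(\mathfrak{a},\mathfrak{b})=\alpha$, $(\mathfrak{a},\sigma)=(\mathfrak{b},\sigma)=\frac{\alpha-1}{2}$, $(\sigma,\sigma)=\frac{(\alpha-1)^2}{2}$. For $x$ in an algebra $J$, $J_\lambda(x)=\{u:xu=\lambda u\}$; a primitive axis of Jordan type half is $x\neq0$, $x^2=x$, $J=J_1(x)\oplus J_0(x)\oplus J_{1/2}(x)$, $J_1(x)=\mathbb{F}x$, with fusion rules $J_1J_1\subseteq J_1$, $J_1J_0=0$, $J_0J_0\subseteq J_0$, $J_1J_{1/2},J_0J_{1/2}\subseteq J_{1/2}$, $J_{1/2}J_{1/2}\subseteq J_1\oplus J_0$. The Miyamoto involution $\tau_x$ is the automorphism acting as identity on $J_1(x)\oplus J_0(x)$ and $-1$ on $J_{1/2}(x)$.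 *)

From HB Require Import structures.
From mathcomp Require Import all_boot all_order all_algebra.
Set Implicit Arguments. Unset Strict Implicit. Unset Printing Implicit Defensive.
Import Order.TTheory GRing.Theory Num.Theory.
Local Open Scope ring_scope.

Section JAlg.
Variables (F : fieldType) (alpha : F).

Definition Jv := 'rV[F]_3.
Definition ja : Jv := delta_mx 0 (0 : 'I_3).
Definition jb : Jv := delta_mx 0 (1 : 'I_3).
Definition jsig : Jv := delta_mx 0 (2 : 'I_3).

Definition jtab (i j : 'I_3) : Jv :=
  match nat_of_ord i, nat_of_ord j with
  | 0, 0 => ja
  | 1, 1 => jb
  | 0, 1 | 1, 0 => 2^-1 *: ja + 2^-1 *: jb + jsig
  | 0, _ | _, 0 => ((alpha - 1) / 2) *: ja
  | 1, _ | _, 1 => ((alpha - 1) / 2) *: jb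
  | _, _ => ((alpha - 1) / 2) *: jsig
  end.

Definition jmul (u v : Jv) : Jv :=
  \sum_(i < 3) \sum_(j < 3) (u 0 i * v 0 j) *: jtab i j.

Definition eigen (x : Jv) (l : F) (u : Jv) : Prop := jmul x u = l *: u.

Definition primitive_axis_half (x : Jv) : Prop :=
  [/\ x != 0 /\ jmul x x = x,
      (forall u, exists u1 u0 uh,
          [/\ eigen x 1 u1, eigen x 0 u0, eigen x 2^-1 uh & u = u1 + u0 + uh]),
      (forall u1 u0 uh, eigen x 1 u1 -> eigen x 0 u0 -> eigen x 2^-1 uh ->
          u1 + u0 + uh = 0 -> [/\ u1 = 0, u0 = 0 & uh = 0]),
      (forall u, eigen x 1 u -> exists c : F, u = c *: x) &
      [/\ (forall u v, eigen x 1 u -> eigen x 1 v -> eigen x 1 (jmul u v)) /\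
          (forall u v, eigen x 1 u -> eigen x 0 v -> jmul u v = 0),
          (forall u v, eigen x 0 u -> eigen x 0 v -> eigen x 0 (jmul u v)),
          (forall u v, eigen x 1 u -> eigen x 2^-1 v -> eigen x 2^-1 (jmul u v)),
          (forall u v, eigen x 0 u -> eigen x 2^-1 v -> eigen x 2^-1 (jmul u v)) &
          (forall u v, eigen x 2^-1 u -> eigen x 2^-1 v ->
             exists w1 w0, [/\ eigen x 1 w1, eigen x 0 w0 & jmul u v = w1 + w0])]].

(* Miyamoto involution: tau_x acts as identity on J_1(x) + J_0(x) and as -1
   on J_{1/2}(x).  [miyamoto x u v] means u^{tau_x} = v, i.e. v is obtained from
   a decomposition u = u1 + u0 + uh by flipping the sign of uh (unique when
   x is a primitive axis, since the sum is direct). *)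
Definition miyamoto (x u v : Jv) : Prop :=
  exists u1 u0 uh, [/\ eigen x 1 u1, eigen x 0 u0, eigen x 2^-1 uh,
                      u = u1 + u0 + uh & v = u1 + u0 - uh].
End JAlg.

(* Let [p], [q] be the [a]- and [b]-coordinates of [4 (alpha - 1) s]; the
   quadratic satisfied by [zeta] is exactly [p + q = 4 p q = 1 - alpha], which
   makes [s] and [t] square-zero with [s t = 1/8].  For any such pair and
   [xi != 0], [d = xi s + 1/2 + xi^-1 t] is idempotent and
   [d s = s/2 + 1/(8 xi)], [d t = t/2 + xi/8], so [s - xi^-2 t] lies in
   [J_{1/2}(d)] and
     [s = (4 xi)^-1 d - (4 xi)^-1 (1 - d) + (s - xi^-2 t)/2]
   is the eigenspace decomposition of [s]; flipping its last summand gives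
   [xi^-2 t].  The pair [(t, xi^-1)] defines the same [d], whence the second
   identity. *)
From HB Require Import structures.
From mathcomp Require Import all_boot all_order all_algebra ring.
Set Implicit Arguments. Unset Strict Implicit. Unset Printing Implicit Defensive.
Import Order.TTheory GRing.Theory Num.Theory.
Local Open Scope ring_scope.

Lemma ord3_ind (P : 'I_3 -> Prop) : P 0 -> P 1 -> P 2 -> forall i, P i.
Proof.
by move=> P0 P1 P2 [[|[|[|//]]] lti]; [move: P0 | move: P1 | move: P2];
  congr P; apply: val_inj.
Qed.

Section JordanAlgebra.
Variables (F : fieldType) (alpha : F).
Local Notation jmul := (jmul alpha).

Definition jvec (x y z : F) : Jv F := x *: ja F + y *: jb F + z *: jsig F.

Definition jone : Jv F := (2 / (alpha - 1)) *: jsig F.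

Lemma jvec_coord (u : Jv F) : u = jvec (u 0 0) (u 0 1) (u 0 2).
Proof. by apply/rowP; apply: ord3_ind; rewrite !mxE /=; ring. Qed.

Lemma jvec0 : jvec 0 0 0 = 0.
Proof. by rewrite /jvec !scale0r !addr0. Qed.

Lemma jtabC i j : jtab alpha i j = jtab alpha j i.
Proof. by case: i j => [[|[|[|//]]] ?] [[|[|[|//]]] ?]. Qed.

Lemma jmulC u v : jmul u v = jmul v u.
Proof.
rewrite /jmul exchange_big; apply: eq_bigr => i _; apply: eq_bigr => j _.
by rewrite mulrC jtabC.
Qed.

Lemma jmul_is_linear u : linear (jmul u).
Proof.
move=> k v w; rewrite /jmul scaler_sumr -big_split; apply: eq_bigr => i _ /=.
rewrite scaler_sumr -big_split; apply: eq_bigr => j _ /=.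
by rewrite !mxE scalerA -scalerDl; congr (_ *: _); ring.
Qed.

HB.instance Definition _ u :=
  GRing.isLinear.Build F (Jv F) (Jv F) *:%R (jmul u) (jmul_is_linear u).

Lemma jmulZl k u v : jmul (k *: u) v = k *: jmul u v.
Proof. by rewrite jmulC linearZ /= jmulC. Qed.

Lemma jmulDl u v w : jmul (u + v) w = jmul u w + jmul v w.
Proof. by rewrite jmulC linearD /= !(jmulC w). Qed.

Lemma jmul_jvec x y z x' y' z' : jmul (jvec x y z) (jvec x' y' z') =
  let c := (alpha - 1) / 2 in
  jvec (x * x' + 2^-1 * (x * y' + y * x') + c * (x * z' + z * x'))
       (y * y' + 2^-1 * (x * y' + y * x') + c * (y * z' + z * y'))
       ((x * y' + y * x') + c * (z * z')).
Proof.
rewrite /jmul !big_ord_recl !big_ord0 /=.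
by apply/rowP; apply: ord3_ind; rewrite !mxE /=; ring.
Qed.

Lemma jmul_ab : jmul (ja F) (jb F) = jvec 2^-1 2^-1 1.
Proof.
rewrite (jvec_coord (ja F)) (jvec_coord (jb F)) jmul_jvec !mxE /=.
by congr jvec; ring.
Qed.

Lemma jvec_of_ab m n :
  m *: ja F + jmul (ja F) (jb F) + n *: jb F = jvec (m + 2^-1) (n + 2^-1) 1.
Proof. by rewrite jmul_ab; apply/rowP => i; rewrite !mxE; ring. Qed.

Lemma eigenZ x l u k : eigen alpha x l u -> eigen alpha x l (k *: u).
Proof. by rewrite /eigen linearZ /= => ->; rewrite !scalerA mulrC. Qed.

Section Unital.
Hypotheses (two_neq0 : (2 : F) != 0) (alpha_neq1 : alpha != 1).

Let alpha1_neq0 : alpha - 1 != 0.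
Proof. by rewrite subr_eq0. Qed.

Let four_neq0 : (4 : F) != 0.
Proof. by rewrite (_ : 4 = 2 * 2) ?mulf_neq0 //; ring. Qed.

Let eight_neq0 : (8 : F) != 0.
Proof. by rewrite (_ : 8 = 2 * 4) ?mulf_neq0 //; ring. Qed.

Lemma jmulr1 u : jmul u jone = u.
Proof.
have -> : jone = jvec 0 0 (2 / (alpha - 1)) by rewrite /jvec !scale0r !add0r.
rewrite [RHS]jvec_coord {1}(jvec_coord u) jmul_jvec.
by congr jvec; field; rewrite alpha1_neq0.
Qed.

Lemma jmul1r u : jmul jone u = u.
Proof. by rewrite jmulC jmulr1. Qed.

Lemma jvec_sqr0 p q : p + q = 1 - alpha -> 4 * (p * q) = 1 - alpha ->
  jmul (jvec p q 1) (jvec p q 1) = 0.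
Proof.
move=> pq_sum; rewrite -pq_sum => pq_prod; rewrite jmul_jvec -jvec0 /=.
have -> : alpha = 1 - (p + q) by rewrite pq_sum; ring.
congr jvec; [by field | by field |].
transitivity (2^-1 * (4 * (p * q) - (p + q))); first by field.
by rewrite pq_prod subrr mulr0.
Qed.

Lemma jvec_mul_swap p q : p + q = 1 - alpha -> 4 * (p * q) = 1 - alpha ->
  jmul (jvec p q 1) (jvec q p 1) = jvec 0 0 (alpha * (alpha - 1)).
Proof.
move=> pq_sum; rewrite -pq_sum => pq_prod; rewrite jmul_jvec /=.
have -> : alpha = 1 - (p + q) by rewrite pq_sum; ring.
congr jvec; [by field | by field |].
transitivity ((1 - (p + q)) * (1 - (p + q) - 1) - 2^-1 * (4 * (p * q) - (p + q))).
  by field.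
by rewrite pq_prod subrr mulr0 subr0.
Qed.

Lemma root_coords_sum_prod zeta :
    zeta != 0 -> zeta ^+ 2 - (4 * alpha - 2) * zeta + 1 = 0 ->
  let p := - (1 + zeta) / 4 + 2^-1 in let q := - (1 + zeta^-1) / 4 + 2^-1 in
  p + q = 1 - alpha /\ 4 * (p * q) = 1 - alpha.
Proof.
move=> zeta_neq0 root p q.
have alphaE : alpha = (1 + zeta) ^+ 2 / (4 * zeta).
  apply: (mulIf (mulf_neq0 four_neq0 zeta_neq0)); rewrite divfK ?mulf_neq0 //.
  by apply/eqP; rewrite -subr_eq0 -oppr_eq0 -root; apply/eqP; ring.
by rewrite /p /q alphaE; split; field; rewrite zeta_neq0 ?two_neq0 ?four_neq0.
Qed.

Lemma sqr0_pair_of_coords p q : alpha != 0 ->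
    p + q = 1 - alpha -> 4 * (p * q) = 1 - alpha ->
  let s := (4 * (alpha - 1))^-1 *: jvec p q 1 in
  let t := (alpha * (alpha - 1))^-1 *: jvec q p 1 in
  [/\ jmul s s = 0, jmul t t = 0 & jmul s t = 8^-1 *: jone].
Proof.
move=> alpha_neq0 pq_sum pq_prod s t.
have qp_sum : q + p = 1 - alpha by rewrite addrC.
have qp_prod : 4 * (q * p) = 1 - alpha by rewrite (mulrC q).
rewrite /s /t !jmulZl !linearZ /= !jvec_sqr0 // !scaler0; split=> //.
rewrite jvec_mul_swap // /jvec !scale0r !add0r !scalerA.
by congr (_ *: _); field; rewrite alpha_neq0 alpha1_neq0 ?four_neq0 ?eight_neq0.
Qed.

Section AxisOfPair.
Variables (s t : Jv F) (xi : F).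
Hypotheses (xi_neq0 : xi != 0) (s_sqr0 : jmul s s = 0) (t_sqr0 : jmul t t = 0).
Hypothesis st_eq : jmul s t = 8^-1 *: jone.

Let d := xi *: s + 2^-1 *: jone + xi^-1 *: t.

Ltac coordinatewise := apply/rowP => i; rewrite !mxE; field;
  rewrite ?alpha1_neq0 ?two_neq0 ?four_neq0 ?eight_neq0 ?xi_neq0.

Lemma jmul_axis u : jmul d u = xi *: jmul s u + 2^-1 *: u + xi^-1 *: jmul t u.
Proof. by rewrite /d !jmulDl (jmulZl xi) (jmulZl 2^-1) (jmulZl xi^-1) jmul1r. Qed.

Lemma jmul_axis_s : jmul d s = 2^-1 *: s + (8 * xi)^-1 *: jone.
Proof. by rewrite jmul_axis s_sqr0 jmulC st_eq; coordinatewise. Qed.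

Lemma jmul_axis_t : jmul d t = 2^-1 *: t + (xi / 8) *: jone.
Proof. by rewrite jmul_axis t_sqr0 st_eq; coordinatewise. Qed.

Lemma jmul_axis_idem : jmul d d = d.
Proof.
rewrite jmul_axis (jmulC s) (jmulC t) jmul_axis_s jmul_axis_t /d.
by coordinatewise.
Qed.

Lemma axis_half_eigen : eigen alpha d 2^-1 (s - xi ^- 2 *: t).
Proof.
by rewrite /eigen linearB linearZ /= jmul_axis_s jmul_axis_t; coordinatewise.
Qed.

Lemma axis_zero_eigen : eigen alpha d 0 (jone - d).
Proof. by rewrite /eigen linearB /= jmulr1 jmul_axis_idem subrr scale0r. Qed.

Lemma miyamoto_axis_pair : miyamoto alpha d s (xi ^- 2 *: t).
Proof.
exists ((4 * xi)^-1 *: d), (- (4 * xi)^-1 *: (jone - d)),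
  (2^-1 *: (s - xi ^- 2 *: t)); split.
- by apply: eigenZ; rewrite /eigen scale1r jmul_axis_idem.
- exact: eigenZ axis_zero_eigen.
- exact: eigenZ axis_half_eigen.
- by rewrite /d; coordinatewise.
- by rewrite /d; coordinatewise.
Qed.

End AxisOfPair.

End Unital.

End JordanAlgebra.

Theorem lemma3p9 (F : fieldType) (alpha zeta xi : F) :
  (2 \notin [pchar F])%N ->
  alpha != 0 -> alpha != 1 ->
  zeta ^+ 2 - (4 * alpha - 2) * zeta + 1 = 0 ->
  xi != 0 ->
  let mu := - (1 + zeta) / 4 in
  let nu := - (1 + zeta^-1) / 4 in
  let a := ja F in let b := jb F in let sig := jsig F in
  let ab := jmul alpha a b in
  let s := (4 * (alpha - 1))^-1 *: (mu *: a + ab + nu *: b) in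
  let t := (alpha * (alpha - 1))^-1 *: (nu *: a + ab + mu *: b) in
  let one := (2 / (alpha - 1)) *: sig in
  let d := xi *: s + 2^-1 *: one + xi^-1 *: t in
  primitive_axis_half alpha d ->
  miyamoto alpha d s (xi ^- 2 *: t) /\ miyamoto alpha d t (xi ^+ 2 *: s).
Proof.
move=> char2 alpha_neq0 alpha_neq1 root xi_neq0 mu nu a b sig ab s t one d _.
have two_neq0 : (2 : F) != 0.
  by apply: contra char2 => /eqP two0; rewrite inE /= two0.
have zeta_neq0 : zeta != 0.
  apply/eqP => zeta0; move: root.
  by rewrite zeta0 expr2 !mul0r mulr0 subr0 add0r => /eqP; rewrite oner_eq0.
have [pq_sum pq_prod] := root_coords_sum_prod two_neq0 zeta_neq0 root.
have sE : s = (4 * (alpha - 1))^-1 *: jvec (mu + 2^-1) (nu + 2^-1) 1.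
  by rewrite /s /ab jvec_of_ab.
have tE : t = (alpha * (alpha - 1))^-1 *: jvec (nu + 2^-1) (mu + 2^-1) 1.
  by rewrite /t /ab jvec_of_ab.
have [s_sqr0 t_sqr0 st_eq] :
    [/\ jmul alpha s s = 0, jmul alpha t t = 0 & jmul alpha s t = 8^-1 *: jone alpha].
  by rewrite sE tE; exact: sqr0_pair_of_coords.
split; first exact: miyamoto_axis_pair.
have -> : d = xi^-1 *: t + 2^-1 *: one + xi^-1^-1 *: s.
  by rewrite invrK /d addrC [xi *: s + _]addrC addrA.
rewrite -[xi ^+ 2]invrK -exprVn.
by apply: miyamoto_axis_pair; rewrite ?invr_neq0 // jmulC.
Qed.
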